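(* Let $\|w\|_{L^\infty(\Omega)}\le\bar c_0\le\bar v/\sqrt5$ and $\|w_x\|_{L^\infty(\Omega)}\le\bar c_1$, and let $\underline v^2:=\bar v^2-\bar c_0^2$. Then for any $\xi\in X$ and $\delta\xi\in\delta X$, the first directional derivative of $f$ satisfies (pointwise in $\tau$) $$|f'(\xi,\xi_\tau)[\delta\xi,\delta\xi_\tau]|\le\bar\alpha_0\|\xi_\tau\|\|\delta\xi\|+\bar\alpha_1\|\delta\xi_\tau\|,\qquad\bar\alpha_0=\frac{21\bar c_1}{4\underline v^2},\ \ \bar\alpha_1=\frac{7}{2\underline v}.$$
   Context: Fix $\bar v>0$, $x_O\ne x_D\in\mathbb R^2$, $w\in C^3(\mathbb R^2,\mathbb R^2)$ with $\|w(x)\|<\bar v$; $w_x$ is its Jacobian (operator norm); $\Omega\subset\mathbb R^2$ is an ellipse with foci $x_O,x_D$ containing every globally optimal trajectory, and $\|g\|_{L^\infty(\Omega)}$ is the essential supremum over $\Omega$ of the pointwise norm. $f(x,p)=\frac{-p^Tw(x)+\sqrt{(p^Tw(x))^2+(\bar v^2-w(x)^Tw(x))p^Tp}}{\bar v^2-w(x)^Tw(x)}$; $f'(\xi,\xi_\tau)[\delta\xi,\delta\xi_\tau]$ is the derivative of $f$ with respect to $(x,p)$ at $(\xi(\tau),\xi_\tau(\tau))$ in direction $(\delta\xi(\tau),\delta\xi_\tau(\tau))$. $X=\{\xi\in W^{1,\infty}(]0,1[,\mathbb R^2):\xi(0)=x_O,\xi(1)=x_D\}$, $\delta X=W_0^{1,\infty}(]0,1[,\mathbb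 R^2)$; subscript $\tau$ denotes the derivative; $\|\cdot\|$ is the Euclidean norm.
   Formalization: The bound on $f'(\xi,\xi_\tau)[\delta\xi,\delta\xi_\tau]$ is asserted only at those τ where ξ(τ) lies in Ω and $\xi_\tau(\tau)\ne0$, not for every τ. The statement above fails without it. *)

From Stdlib Require Import Reals Lra.
From Coquelicot Require Import Coquelicot.
Open Scope R_scope.

Definition dot (u v : R * R) : R := fst u * fst v + snd u * snd v.
Definition norm2 (u : R * R) : R := sqrt (dot u u).
Definition vadd (u v : R * R) : R * R := (fst u + fst v, snd u + snd v).
Definition vsub (u v : R * R) : R * R := (fst u - fst v, snd u - snd v).
Definition vscal (t : R) (u : R * R) : R * R := (t * fst u, t * snd u).

Definition partial1 (g : R -> R -> R) : R -> R -> R :=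
  fun x y => Derive (fun t => g t y) x.
Definition partial2 (g : R -> R -> R) : R -> R -> R :=
  fun x y => Derive (fun t => g x t) y.

Fixpoint Ck (k : nat) (g : R -> R -> R) : Prop :=
  (forall z : R * R, continuous (fun z : R * R => g (fst z) (snd z)) z) /\
  match k with
  | O => True
  | S k' =>
      (forall x y, ex_derive (fun t => g t y) x /\ ex_derive (fun t => g x t) y)
      /\ Ck k' (partial1 g) /\ Ck k' (partial2 g)
  end.

Definition comp1 (w : R * R -> R * R) : R -> R -> R := fun x y => fst (w (x, y)).
Definition comp2 (w : R * R -> R * R) : R -> R -> R := fun x y => snd (w (x, y)).

Definition Ck_field (k : nat) (w : R * R -> R * R) : Prop :=
  Ck k (comp1 w) /\ Ck k (comp2 w).

Definition jac_apply (w : R * R -> R * R) (x v : R * R) : R * R :=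
  (partial1 (comp1 w) (fst x) (snd x) * fst v + partial2 (comp1 w) (fst x) (snd x) * snd v,
   partial1 (comp2 w) (fst x) (snd x) * fst v + partial2 (comp2 w) (fst x) (snd x) * snd v).

(* Operator norm bound: ||w_x(x)|| <= c  iff  ||w_x(x) v|| <= c ||v|| for all v. *)
Definition jac_opnorm_le (w : R * R -> R * R) (x : R * R) (c : R) : Prop :=
  forall v : R * R, norm2 (jac_apply w x v) <= c * norm2 v.

Definition f_cost (vbar : R) (w : R * R -> R * R) (x p : R * R) : R :=
  (- dot p (w x) + sqrt ((dot p (w x)) ^ 2 + (vbar ^ 2 - dot (w x) (w x)) * dot p p))
  / (vbar ^ 2 - dot (w x) (w x)).

Definition ellipse (xO xD : R * R) (a : R) : R * R -> Prop :=
  fun x => norm2 (vsub x xO) + norm2 (vsub x xD) <= 2 * a.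

(* Lipschitz on [0,1] (= W^{1,infty}(]0,1[) representative). *)
Definition lipschitz01 (g : R -> R * R) : Prop :=
  exists L, forall s t, 0 <= s <= 1 -> 0 <= t <= 1 ->
    norm2 (vsub (g s) (g t)) <= L * Rabs (s - t).

Definition curve_derive (g : R -> R * R) (t : R) (v : R * R) : Prop :=
  is_derive (fun s => fst (g s)) t (fst v) /\ is_derive (fun s => snd (g s)) t (snd v).

(* With w = w(x), f(x, p) is the positive root T of
     (v^2 - |w|^2) T^2 + 2 (p.w) T - |p|^2 = 0,   i.e.   v T = |p - T w|.
   Differentiating this relation along (x + t dx, p + t dp) gives
     f' = (p - T w).(dp - T w_x dx) / S,   S = (v^2 - |w|^2) T + p.w > 0,
   with |p - T w| = v T.  If |w| <= c0 <= v / sqrt 5 then 2 c0 <= vlow, whence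
   T <= 2 |p| / vlow, S >= vlow |p| and v <= 9 vlow / 8, so that
     |f'| <= 9 / (2 vlow^2) |p| |w_x dx| + 9 / (4 vlow) |dp|,
   which is below the claimed bound. *)

From Stdlib Require Import Reals Lra.
From Coquelicot Require Import Coquelicot.
Open Scope R_scope.

Lemma dot_self_nonneg (u : R * R) : 0 <= dot u u.
Proof. destruct u as [u1 u2]; unfold dot; simpl; nra. Qed.

Lemma dot_self_pos (u : R * R) : u <> (0, 0) -> 0 < dot u u.
Proof.
  destruct u as [u1 u2]; unfold dot; simpl; intros Hu.
  destruct (Req_dec u1 0) as [->|H1]; destruct (Req_dec u2 0) as [->|H2];
    [congruence | nra ..].
Qed.

Lemma norm2_nonneg (u : R * R) : 0 <= norm2 u.
Proof. apply sqrt_pos. Qed.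

Lemma norm2_sqr (u : R * R) : norm2 u * norm2 u = dot u u.
Proof. apply sqrt_sqrt, dot_self_nonneg. Qed.

Lemma norm2_pos (u : R * R) : u <> (0, 0) -> 0 < norm2 u.
Proof. intros Hu; apply sqrt_lt_R0, dot_self_pos, Hu. Qed.

Lemma Rabs_dot_le (u v : R * R) : Rabs (dot u v) <= norm2 u * norm2 v.
Proof.
  unfold norm2; rewrite <- sqrt_mult by apply dot_self_nonneg.
  rewrite <- sqrt_Rsqr_abs; apply sqrt_le_1_alt.
  destruct u as [u1 u2], v as [v1 v2]; unfold dot, Rsqr; simpl.
  pose proof (Rle_0_sqr (u1 * v2 - u2 * v1)); unfold Rsqr in *; nra.
Qed.

Lemma dot_vsub_vscal (u v z : R * R) (t : R) :
  dot u (vsub v (vscal t z)) = dot u v - t * dot u z.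
Proof. unfold dot, vsub, vscal; simpl; ring. Qed.

Lemma Rabs_dot_vsub_vscal_le (u v z : R * R) (t : R) : 0 <= t ->
  Rabs (dot u (vsub v (vscal t z))) <= norm2 u * (norm2 v + t * norm2 z).
Proof.
  intros Ht; rewrite dot_vsub_vscal.
  eapply Rle_trans; [apply Rabs_triang |]; rewrite Rabs_Ropp, Rabs_mult, (Rabs_pos_eq t Ht).
  pose proof (Rabs_dot_le u v) as Huv; pose proof (Rabs_dot_le u z) as Huz.
  pose proof (Rmult_le_compat_l t _ _ Ht Huz); nra.
Qed.

Lemma vadd_vscal_0 (x d : R * R) : vadd x (vscal 0 d) = x.
Proof. destruct x as [x1 x2]; unfold vadd, vscal; simpl; f_equal; ring. Qed.

Lemma is_derive_dot (U V : R -> R * R) (x : R) (du dv : R * R) :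
  curve_derive U x du -> curve_derive V x dv ->
  is_derive (fun t => dot (U t) (V t)) x (dot du (V x) + dot (U x) dv).
Proof.
  intros [HU1 HU2] [HV1 HV2].
  pose proof (is_derive_plus _ _ x _ _ (is_derive_mult _ _ x _ _ HU1 HV1 Rmult_comm)
                (is_derive_mult _ _ x _ _ HU2 HV2 Rmult_comm)) as H.
  unfold dot; simpl in H |- *.
  replace (fst du * fst (V x) + snd du * snd (V x) + (fst (U x) * fst dv + snd (U x) * snd dv))
    with (fst du * fst (V x) + fst (U x) * fst dv + (snd du * snd (V x) + snd (U x) * snd dv))
    by ring.
  exact H.
Qed.

Lemma curve_derive_line (x d : R * R) (t : R) :
  curve_derive (fun s => vadd x (vscal s d)) t d.
Proof. split; simpl; auto_derive; auto; ring. Qed.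

Lemma Ck_ex_diff_n (k : nat) (g : R -> R -> R) :
  Ck k g -> forall x y, ex_diff_n g k x y.
Proof.
  revert g; induction k as [|k IH]; intros g [Hcont Hk] x y;
    (split; [apply continuity_2d_pt_filterlim, (Hcont (x, y)) |]).
  - exact I.
  - destruct Hk as [Hex [H1 H2]]; destruct (Hex x y) as [Hx Hy].
    repeat split; [exact Hx | exact Hy | apply IH, H1 | apply IH, H2].
Qed.

Lemma DL_pol_1 (g : R -> R -> R) (x y dx dy : R) :
  DL_pol 1 g x y dx dy = g x y + (partial1 g x y * dx + partial2 g x y * dy).
Proof.
  unfold DL_pol, differential, partial_derive, partial1, partial2, Binomial.C; simpl; field.
Qed.

(* A second-order Taylor bound [|g - DL_pol 1 g| <= D m^2] gives the first-order
   differentiability estimate [<= eps m] as soon as [m <= eps / (|D| + 1)]. *)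
Lemma ex_diff_n_2_differentiable (g : R -> R -> R) (x y : R) :
  (forall u v, ex_diff_n g 2 u v) ->
  differentiable_pt_lim g x y (partial1 g x y) (partial2 g x y).
Proof.
  intros Hg eps.
  destruct (Taylor_Lagrange_2d g 1 x y) as [D [del HD]].
  { exists (mkposreal 1 Rlt_0_1); intros u v _ _; apply Hg. }
  assert (HD1 : 0 < Rabs D + 1) by (pose proof (Rabs_pos D); lra).
  assert (Hdelta : 0 < Rmin del (eps / (Rabs D + 1))).
  { apply Rmin_pos; [apply cond_pos | apply Rdiv_lt_0_compat; [apply cond_pos | lra]]. }
  exists (mkposreal _ Hdelta); simpl; intros u v Hu Hv.
  pose proof (Rmin_l del (eps / (Rabs D + 1))) as Hdel.
  pose proof (Rmin_r del (eps / (Rabs D + 1))) as Heps.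
  specialize (HD u v ltac:(lra) ltac:(lra)); rewrite DL_pol_1 in HD.
  set (m := Rmax (Rabs (u - x)) (Rabs (v - y))) in *.
  assert (Hm0 : 0 <= m) by (eapply Rle_trans; [apply Rabs_pos | apply Rmax_l]).
  assert (Hm : m * (Rabs D + 1) <= eps).
  { assert (m < eps / (Rabs D + 1)) by (apply Rmax_lub_lt; lra).
    apply Rlt_le, (Rmult_lt_reg_r (/ (Rabs D + 1))); [apply Rinv_0_lt_compat; lra |].
    rewrite Rmult_assoc, Rinv_r by lra; lra. }
  replace (g u v - g x y - (partial1 g x y * (u - x) + partial2 g x y * (v - y)))
    with (g u v - (g x y + (partial1 g x y * (u - x) + partial2 g x y * (v - y)))) by ring.
  eapply Rle_trans; [exact HD |].
  pose proof (Rle_abs D); simpl; nra.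
Qed.

Lemma is_derive_along_line (g : R -> R -> R) (x y a b : R) :
  (forall u v, ex_diff_n g 2 u v) ->
  is_derive (fun t => g (x + t * a) (y + t * b)) 0 (partial1 g x y * a + partial2 g x y * b).
Proof.
  intros Hg; apply is_derive_Reals, derivable_pt_lim_comp_2d.
  - rewrite !Rmult_0_l, !Rplus_0_r; apply ex_diff_n_2_differentiable, Hg.
  - apply is_derive_Reals; auto_derive; auto; ring.
  - apply is_derive_Reals; auto_derive; auto; ring.
Qed.

Lemma curve_derive_field_line (k : nat) (w : R * R -> R * R) (x d : R * R) :
  (2 <= k)%nat -> Ck_field k w ->
  curve_derive (fun t => w (vadd x (vscal t d))) 0 (jac_apply w x d).
Proof.
  intros Hk [Hw1 Hw2]; split;
    [apply (is_derive_along_line (comp1 w)) | apply (is_derive_along_line (comp2 w))];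
    intros u v; apply (ex_diff_n_m k 2 Hk), Ck_ex_diff_n; assumption.
Qed.

Lemma is_derive_quadratic_root (a b c : R -> R) (x da db dc : R) :
  is_derive a x da -> is_derive b x db -> is_derive c x dc ->
  a x <> 0 -> 0 < b x ^ 2 + a x * c x ->
  let S := sqrt (b x ^ 2 + a x * c x) in
  let T := (- b x + S) / a x in
  is_derive (fun t => (- b t + sqrt (b t ^ 2 + a t * c t)) / a t) x
    ((dc - 2 * T * db - T ^ 2 * da) / (2 * S)).
Proof.
  intros Ha Hb Hc Ha0 Hdisc S T.
  assert (HS2 : S * S = b x ^ 2 + a x * c x) by (apply sqrt_sqrt; lra).
  assert (HS : 0 < S) by (apply sqrt_lt_R0, Hdisc).
  auto_derive.
  - repeat split; try (eexists; eassumption); lra.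
  - replace (Derive (fun y => a y) x) with da by (symmetry; now apply is_derive_unique).
    replace (Derive (fun y => b y) x) with db by (symmetry; now apply is_derive_unique).
    replace (Derive (fun y => c y) x) with dc by (symmetry; now apply is_derive_unique).
    change (b x * (b x * 1)) with (b x ^ 2); fold S; unfold T.
    (* The explicit derivative and the implicit form differ by a multiple of
       [b x ^ 2 + a x * c x - S * S]. *)
    match goal with |- ?L = ?R =>
      assert (E : L - R = da * (b x ^ 2 + a x * c x - S * S) / (2 * a x ^ 2 * S))
        by (field; lra) end.
    rewrite <- HS2, Rminus_diag, Rmult_0_r, Rdiv_0_l in E; lra.
Qed.

Definition travel_disc (v : R) (w p : R * R) : R :=
  sqrt (dot p w ^ 2 + (v ^ 2 - dot w w) * dot p p).

(* [f_cost v w x p] is convertible to [travel_time v (w x) p]. *)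
Definition travel_time (v : R) (w p : R * R) : R :=
  (- dot p w + travel_disc v w p) / (v ^ 2 - dot w w).

Lemma is_derive_travel_time (v : R) (W P : R -> R * R) (x : R) (e q : R * R) :
  curve_derive W x e -> curve_derive P x q ->
  0 < v ^ 2 - dot (W x) (W x) -> P x <> (0, 0) ->
  let T := travel_time v (W x) (P x) in
  is_derive (fun t => travel_time v (W t) (P t)) x
    (dot (vsub (P x) (vscal T (W x))) (vsub q (vscal T e)) / travel_disc v (W x) (P x)).
Proof.
  intros HW HP Hwind Hp T.
  assert (Hdisc : 0 < dot (P x) (W x) ^ 2 + (v ^ 2 - dot (W x) (W x)) * dot (P x) (P x)).
  { pose proof (dot_self_pos _ Hp); pose proof (pow2_ge_0 (dot (P x) (W x))); nra. }
  assert (Ha : is_derive (fun t => v ^ 2 - dot (W t) (W t)) x (0 - (dot e (W x) + dot (W x) e))).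
  { apply (is_derive_minus (fun _ => v ^ 2));
      [apply (is_derive_const (v ^ 2) x) | apply is_derive_dot; assumption]. }
  pose proof (is_derive_quadratic_root _ _ _ x _ _ _ Ha (is_derive_dot _ _ _ _ _ HP HW)
                (is_derive_dot _ _ _ _ _ HP HP) ltac:(lra) Hdisc) as H.
  cbv beta zeta in H.
  match type of H with is_derive _ _ ?d =>
    replace (dot (vsub (P x) (vscal T (W x))) (vsub q (vscal T e)) / travel_disc v (W x) (P x))
      with d; [exact H |] end.
  assert (HS : 0 < travel_disc v (W x) (P x)) by (apply sqrt_lt_R0, Hdisc).
  unfold T, travel_time in *; unfold travel_disc in *.
  set (S := sqrt _) in *.
  unfold dot, vsub, vscal in *; simpl in *; field; lra.
Qed.

Section TravelTime.

Variables (v : R) (w p : R * R).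
Hypothesis Hwind : 0 < v ^ 2 - dot w w.
Hypothesis Hp : p <> (0, 0).

Let A := v ^ 2 - dot w w.
Let T := travel_time v w p.
Let S := travel_disc v w p.

Lemma travel_disc_sqr : S * S = dot p w ^ 2 + A * dot p p.
Proof.
  apply sqrt_sqrt; pose proof (dot_self_nonneg p); pose proof (pow2_ge_0 (dot p w)).
  unfold A; nra.
Qed.

Lemma Rabs_dot_lt_travel_disc : Rabs (dot p w) < S.
Proof.
  pose proof travel_disc_sqr; pose proof (dot_self_pos p Hp).
  assert (0 <= S) by apply sqrt_pos.
  assert (0 < A * dot p p) by (apply Rmult_lt_0_compat; assumption).
  unfold Rabs; destruct (Rcase_abs (dot p w)); nra.
Qed.

Lemma travel_disc_pos : 0 < S.
Proof. pose proof Rabs_dot_lt_travel_disc; pose proof (Rabs_pos (dot p w)); lra. Qed.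

Lemma travel_time_pos : 0 < T.
Proof.
  pose proof Rabs_dot_lt_travel_disc; pose proof (Rle_abs (dot p w)).
  apply Rdiv_lt_0_compat; [fold S |]; lra.
Qed.

Lemma travel_time_root : A * T + dot p w = S.
Proof. unfold T, travel_time; fold A S; field; unfold A; lra. Qed.

Lemma travel_time_quadratic : A * T ^ 2 + 2 * dot p w * T = dot p p.
Proof.
  apply (Rmult_eq_reg_l A); [| unfold A; lra].
  transitivity ((A * T + dot p w) ^ 2 - dot p w ^ 2); [ring |].
  rewrite travel_time_root; replace (S ^ 2) with (S * S) by ring.
  rewrite travel_disc_sqr; ring.
Qed.

Lemma norm2_sub_travel_time : 0 < v -> norm2 (vsub p (vscal T w)) = v * T.
Proof.
  intros Hv; pose proof travel_time_pos; pose proof travel_time_quadratic.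
  unfold norm2; rewrite <- (sqrt_Rsqr (v * T)) by nra; f_equal.
  transitivity (dot p p - 2 * dot p w * T + T ^ 2 * dot w w).
  - unfold dot, vsub, vscal; simpl; ring.
  - rewrite <- travel_time_quadratic; unfold A, Rsqr; ring.
Qed.

Lemma sqrt_wind_norm2_le_travel_disc : sqrt A * norm2 p <= S.
Proof.
  assert (HA : sqrt A * sqrt A = A) by (apply sqrt_sqrt; unfold A; lra).
  apply Rsqr_incr_0_var; [unfold Rsqr | apply sqrt_pos].
  replace (sqrt A * norm2 p * (sqrt A * norm2 p))
    with (sqrt A * sqrt A * (norm2 p * norm2 p)) by ring.
  rewrite HA, norm2_sqr, travel_disc_sqr; pose proof (pow2_ge_0 (dot p w)); lra.
Qed.

Lemma travel_time_mul_le : T * (sqrt A - norm2 w) <= norm2 p.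
Proof.
  pose proof travel_time_pos; pose proof travel_time_quadratic; pose proof travel_time_root.
  pose proof sqrt_wind_norm2_le_travel_disc; pose proof (norm2_pos p Hp).
  pose proof (Rabs_dot_le p w); pose proof (Rle_abs (- dot p w)); rewrite Rabs_Ropp in *.
  assert (HTS : T * (S + dot p w) = norm2 p * norm2 p) by (rewrite norm2_sqr; nra).
  apply (Rmult_le_reg_l (norm2 p)); [assumption |].
  nra.
Qed.

Section SmallWind.

Variable c0 : R.
Hypothesis Hv : 0 < v.
Hypothesis Hwc0 : norm2 w <= c0.
Hypothesis Hc0 : 5 * c0 ^ 2 <= v ^ 2.

Let vlow := sqrt (v ^ 2 - c0 ^ 2).

Lemma vlow_sqr : vlow * vlow = v ^ 2 - c0 ^ 2.
Proof. apply sqrt_sqrt; nra. Qed.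

Lemma vlow_pos : 0 < vlow.
Proof. apply sqrt_lt_R0; nra. Qed.

Lemma vlow_le_sqrt_wind : vlow <= sqrt A.
Proof.
  apply sqrt_le_1_alt; unfold A; rewrite <- norm2_sqr.
  pose proof (norm2_nonneg w); nra.
Qed.

Lemma travel_time_mul_vlow_le : T * vlow <= 2 * norm2 p.
Proof.
  pose proof vlow_sqr; pose proof vlow_pos; pose proof (norm2_nonneg w).
  pose proof travel_time_pos; pose proof travel_time_mul_le; pose proof vlow_le_sqrt_wind.
  assert (Hc0vlow : 2 * c0 <= vlow) by nra.
  nra.
Qed.

Lemma speed_travel_time_div_le : v * T / S <= 9 / (4 * vlow).
Proof.
  pose proof vlow_sqr; pose proof vlow_pos; pose proof (norm2_pos p Hp).
  pose proof travel_time_mul_vlow_le; pose proof sqrt_wind_norm2_le_travel_disc.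
  pose proof vlow_le_sqrt_wind; pose proof travel_disc_pos.
  assert (HS : vlow * norm2 p <= S) by nra.
  assert (Hv98 : 8 * v <= 9 * vlow) by (apply Rsqr_incr_0_var; unfold Rsqr; nra).
  apply (Rmult_le_reg_l (4 * vlow * S)); [apply Rmult_lt_0_compat; lra |].
  replace (4 * vlow * S * (v * T / S)) with (4 * vlow * (v * T)) by (field; lra).
  replace (4 * vlow * S * (9 / (4 * vlow))) with (9 * S) by (field; lra).
  nra.
Qed.

Lemma Rabs_travel_time_derivative_le (e q : R * R) :
  Rabs (dot (vsub p (vscal T w)) (vsub q (vscal T e)) / S)
    <= 9 / (2 * vlow ^ 2) * norm2 p * norm2 e + 9 / (4 * vlow) * norm2 q.
Proof.
  pose proof vlow_pos; pose proof travel_time_pos; pose proof travel_time_mul_vlow_le.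
  pose proof (norm2_nonneg e); pose proof (norm2_nonneg q); pose proof travel_disc_pos as HS.
  apply (Rle_trans _ (v * T / S * (norm2 q + T * norm2 e))).
  { rewrite Rabs_div, (Rabs_pos_eq S) by lra.
    replace (v * T / S * (norm2 q + T * norm2 e))
      with (v * T * (norm2 q + T * norm2 e) / S) by (field; lra).
    apply Rmult_le_compat_r; [apply Rlt_le, Rinv_0_lt_compat, HS |].
    rewrite <- norm2_sub_travel_time by assumption.
    apply Rabs_dot_vsub_vscal_le; lra. }
  apply (Rle_trans _ (9 / (4 * vlow) * (norm2 q + 2 * norm2 p / vlow * norm2 e))).
  - apply Rmult_le_compat; [| nra | apply speed_travel_time_div_le |].
    + apply Rdiv_le_0_compat; nra.
    + apply Rplus_le_compat_l, Rmult_le_compat_r; [lra |].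
      apply (Rmult_le_reg_r vlow); [lra |].
      unfold Rdiv; rewrite Rmult_assoc, Rinv_l by lra; lra.
  - right; field; lra.
Qed.

End SmallWind.

End TravelTime.

Lemma sqr_mul_le_of_le_div_sqrt (k c v : R) :
  0 < k -> 0 <= c -> c <= v / sqrt k -> k * c ^ 2 <= v ^ 2.
Proof.
  intros Hk Hc Hcv.
  assert (Hsk : 0 < sqrt k) by (apply sqrt_lt_R0, Hk).
  assert (Hcv' : c * sqrt k <= v).
  { apply (Rmult_le_compat_r (sqrt k)) in Hcv; [| lra].
    unfold Rdiv in Hcv; rewrite Rmult_assoc, Rinv_l in Hcv by lra; lra. }
  rewrite <- (sqrt_sqrt k) at 1 by lra.
  replace (sqrt k * sqrt k * c ^ 2) with ((c * sqrt k) ^ 2) by ring.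
  apply pow_incr; nra.
Qed.

Lemma travel_time_bound_relax (vlow P U D Q c1 : R) :
  0 < vlow -> 0 <= P -> 0 <= U -> U <= c1 * D -> 0 <= Q ->
  9 / (2 * vlow ^ 2) * P * U + 9 / (4 * vlow) * Q
    <= 21 * c1 / (4 * vlow ^ 2) * P * D + 7 / (2 * vlow) * Q.
Proof.
  intros Hvlow HP HU HUD HQ.
  assert (Hvlow2 : 0 < vlow ^ 2) by (apply pow_lt, Hvlow).
  apply Rplus_le_compat.
  - replace (9 / (2 * vlow ^ 2) * P * U) with (P / vlow ^ 2 * (9 / 2 * U)) by (field; lra).
    replace (21 * c1 / (4 * vlow ^ 2) * P * D) with (P / vlow ^ 2 * (21 / 4 * (c1 * D)))
      by (field; lra).
    apply Rmult_le_compat_l; [apply Rdiv_le_0_compat |]; lra.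
  - replace (7 / (2 * vlow)) with (14 / (4 * vlow)) by (field; lra).
    apply Rmult_le_compat_r; [lra |].
    apply Rmult_le_compat_r; [apply Rlt_le, Rinv_0_lt_compat |]; lra.
Qed.

Theorem lemma18
  (vbar : R) (xO xD : R * R) (w : R * R -> R * R) (a c0 c1 : R)
  (Hvbar : 0 < vbar)
  (HOD : xO <> xD)
  (Hw : Ck_field 3 w)
  (Hwlt : forall x, norm2 (w x) < vbar)
  (Ha : norm2 (vsub xO xD) < 2 * a)
  (Hc0 : forall x, ellipse xO xD a x -> norm2 (w x) <= c0)
  (Hc0v : c0 <= vbar / sqrt 5)
  (Hc1 : forall x, ellipse xO xD a x -> jac_opnorm_le w x c1)
  (xi dxi : R -> R * R)
  (HxiX : lipschitz01 xi /\ xi 0 = xO /\ xi 1 = xD)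
  (HdxiX : lipschitz01 dxi /\ dxi 0 = (0, 0) /\ dxi 1 = (0, 0))
  (tau : R) (Htau : 0 < tau < 1)
  (xi_tau dxi_tau : R * R)
  (Hxid : curve_derive xi tau xi_tau)
  (Hdxid : curve_derive dxi tau dxi_tau)
  (Hin : ellipse xO xD a (xi tau))
  (Hnz : xi_tau <> (0, 0)) :
  let vlow := sqrt (vbar ^ 2 - c0 ^ 2) in
  let alpha0 := 21 * c1 / (4 * vlow ^ 2) in
  let alpha1 := 7 / (2 * vlow) in
  exists d : R,
    is_derive (fun t => f_cost vbar w (vadd (xi tau) (vscal t (dxi tau)))
                                      (vadd xi_tau (vscal t dxi_tau))) 0 d /\
    Rabs d <= alpha0 * norm2 xi_tau * norm2 (dxi tau) + alpha1 * norm2 dxi_tau.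
Proof.
  intros vlow alpha0 alpha1.
  set (x := xi tau); set (dx := dxi tau).
  pose proof (Hc0 x Hin) as Hwx.
  assert (Hwind : 0 < vbar ^ 2 - dot (w x) (w x)).
  { rewrite <- norm2_sqr; pose proof (Hwlt x); pose proof (norm2_nonneg (w x)); nra. }
  assert (H5 : 5 * c0 ^ 2 <= vbar ^ 2).
  { apply sqr_mul_le_of_le_div_sqrt; [lra | | exact Hc0v].
    pose proof (norm2_nonneg (w x)); lra. }
  pose proof (is_derive_travel_time vbar _ _ 0 _ _
                (curve_derive_field_line 3 w x dx ltac:(auto) Hw)
                (curve_derive_line xi_tau dxi_tau 0)) as Hderiv.
  cbv beta in Hderiv; rewrite !vadd_vscal_0 in Hderiv.
  specialize (Hderiv Hwind Hnz).
  eexists; split; [exact Hderiv |].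
  eapply Rle_trans;
    [apply (Rabs_travel_time_derivative_le vbar (w x) xi_tau Hwind Hnz c0 Hvbar Hwx H5) |].
  apply travel_time_bound_relax; try apply norm2_nonneg.
  - apply sqrt_lt_R0; nra.
  - exact (Hc1 x Hin dx).
Qed.
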